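(* Let $M_{pq}=(W,V_{pq})$ be the inquisitive model with $W=\{w_1,w_2,w_3\}$, $V_{pq}(w_1)=\{p\}$, $V_{pq}(w_2)=\{q\}$, $V_{pq}(w_3)=\emptyset$, where $p,q$ are distinct propositional letters. Define the families of states $A=\{\{w_1,w_2\},\{w_1,w_3\}\}^{\downarrow}$, $B=\{\{w_1,w_2\},\{w_2,w_3\}\}^{\downarrow}$ and $C=\{\{w_1,w_2\},\{w_3\}\}^{\downarrow}$ (these are, in $M_{pq}$, the propositions of $?p\to?q$, $?q\to?p$ and $(?p\to?q)\land(?q\to?p)$ respectively). Let $\varphi(a,b)$ be a formula of $\textsf{INQ}^-$ in which $p,q$ do not occur, and let $\varphi(?p,?q)$ be the result of substituting $?p$ for $a$ and $?q$ for $b$. Then $[\varphi(?p,?q)]_{M_{pq}}\neq A$, $\neq B$ and $\neq C$.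
   Context: $\textsf{INQ}^-$ is the propositional language built from countably many propositional letters using $\bot,\top$, unary $\neg,?$ and binary $\land$, $\vee$ (inquisitive disjunction), $\otimes$ (tensor). A model is $M=(W,V)$ with $V$ assigning to each world a set of letters. Support at $s\subseteq W$: $s\models p$ iff $p\in V(w)$ for all $w\in s$; $s\models\bot$ iff $s=\emptyset$; $s\models\top$ always; $s\models\psi\land\chi$ iff both; $s\models\psi\vee\chi$ iff $s\models\psi$ or $s\models\chi$; $s\models\psi\otimes\chi$ iff $s=t_1\cup t_2$ for some $t_1\models\psi$, $t_2\models\chi$; $s\models\psi\to\chi$ iff for all $t\subseteq s$, $t\models\psi$ implies $t\models\chi$; $s\models\neg\psi$ iff $s\models\psi\to\bot$; $s\models?\psi$ iff $s\models\psi$ or $s\models\neg\psi$. $[\varphi]_M=\{s\subseteq W: s\models\varphi\}$. For a family $S$ of sets, $S^{\downarrow}=\{t: t\subseteq s \text{ for some } s\in S\}$. *)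

From mathcomp Require Import all_boot.
Set Implicit Arguments. Unset Strict Implicit. Unset Printing Implicit Defensive.

Inductive form : Type :=
  | Atom of nat
  | Bot
  | Top
  | Neg of form
  | Ques of form
  | And of form & form
  | Or of form & form
  | Tensor of form & form.

Section Support.
Variables (W : finType) (V : W -> nat -> bool).

Fixpoint supp (s : {set W}) (f : form) : bool :=
  match f with
  | Atom x => [forall w in s, V w x]
  | Bot => s == set0
  | Top => true
  | Neg g => [forall t : {set W}, (t \subset s) ==> (supp t g ==> (t == set0))]
  | Ques g => supp s g || [forall t : {set W}, (t \subset s) ==> (supp t g ==> (t == set0))]
  | And g h => supp s g && supp s h
  | Or g h => supp s g || supp s h
  | Tensor g h => [exists t1 : {set W}, exists t2 : {set W},
                     [&& s == t1 :|: t2, supp t1 g & supp t2 h]]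
  end.

Definition prop (f : form) : {set {set W}} := [set s | supp s f].
End Support.

Definition downset (W : finType) (S : {set {set W}}) : {set {set W}} :=
  [set t : {set W} | [exists s in S, t \subset s]].

Fixpoint occurs (x : nat) (f : form) : bool :=
  match f with
  | Atom y => y == x
  | Bot | Top => false
  | Neg g | Ques g => occurs x g
  | And g h | Or g h | Tensor g h => occurs x g || occurs x h
  end.

Fixpoint subst2 (a b : nat) (g h : form) (f : form) : form :=
  match f with
  | Atom y => if y == a then g else if y == b then h else Atom y
  | Bot => Bot
  | Top => Top
  | Neg f1 => Neg (subst2 a b g h f1)
  | Ques f1 => Ques (subst2 a b g h f1)
  | And f1 f2 => And (subst2 a b g h f1) (subst2 a b g h f2)
  | Or f1 f2 => Or (subst2 a b g h f1) (subst2 a b g h f2)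
  | Tensor f1 f2 => Tensor (subst2 a b g h f1) (subst2 a b g h f2)
  end.

Definition w1 : 'I_3 := @Ordinal 3 0 isT.
Definition w2 : 'I_3 := @Ordinal 3 1 isT.
Definition w3 : 'I_3 := @Ordinal 3 2 isT.

Definition Vpq (p q : nat) (w : 'I_3) (x : nat) : bool :=
  ((w == w1) && (x == p)) || ((w == w2) && (x == q)).

Definition famA : {set {set 'I_3}} := downset [set [set w1; w2]; [set w1; w3]].
Definition famB : {set {set 'I_3}} := downset [set [set w1; w2]; [set w2; w3]].
Definition famC : {set {set 'I_3}} := downset [set [set w1; w2]; [set w3]].

From mathcomp Require Import all_boot.
Set Implicit Arguments. Unset Strict Implicit. Unset Printing Implicit Defensive.

(* Call a family X of states tame (relative to s0 = {w1, w2}) when X = {∅}, or X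
   contains every state with at most one world and, if s0 ∈ X, every state with at
   most two worlds.  [?p] and [?q] are tame: they contain all singletons but not
   {w1, w2}, on which the letter is undecided; so are [⊥], [⊤] and every other
   letter, which is true nowhere and thus has proposition {∅}.  Tameness survives
   ∧ and ∨; it survives ¬ because ¬{∅} is everything while ¬X = {∅} as soon as X
   contains the singletons; and it survives ⊗ because {∅} is its unit and the
   tensor of two families containing all singletons contains all states with at
   most two worlds.  So [φ(?p, ?q)] is tame, whereas A, B and C contain {w1, w2}
   but miss a two-world state. *)

Section Families.
Variable W : finType.
Implicit Types (X Y : {set {set W}}) (s t u v : {set W}).

Definition negation X : {set {set W}} :=
  [set s : {set W} | [forall t : {set W}, (t \subset s) ==> ((t \in X) ==> (t == set0))]].

Definition tensor X Y : {set {set W}} :=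
  [set s : {set W} | [exists t1 : {set W}, exists t2 : {set W},
                        [&& s == t1 :|: t2, t1 \in X & t2 \in Y]]].

Definition covers (n : nat) X := forall s, #|s| <= n -> s \in X.

Definition tame (s0 : {set W}) X :=
  X = [set set0] \/ covers 1 X /\ (s0 \in X -> covers 2 X).

Lemma covers_le m n X : m <= n -> covers n X -> covers m X.
Proof. by move=> le_mn covX s le_sm; apply: covX; apply: leq_trans le_mn. Qed.

Lemma covers_set0 n X : covers n X -> set0 \in X.
Proof. by apply; rewrite cards0. Qed.

Lemma covers2_tame s0 X : covers 2 X -> tame s0 X.
Proof. by move=> covX; right; split=> //; apply: covers_le covX. Qed.

Lemma tame_setT s0 : tame s0 setT.
Proof. by apply: covers2_tame => s _; rewrite inE. Qed.

Lemma tame_set0 s0 X : tame s0 X -> set0 \in X.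
Proof. by case=> [-> | [/covers_set0 //]]; rewrite set11. Qed.

Lemma not_tame s0 X s :
  s0 != set0 -> s0 \in X -> #|s| <= 2 -> s \notin X -> ~ tame s0 X.
Proof.
move=> nz_s0 Xs0 card_s /negP Xs [X0 | [_ /(_ Xs0) covX]]; last exact/Xs/covX.
by move: Xs0; rewrite X0 in_set1 (negbTE nz_s0).
Qed.

Lemma tameI s0 X Y : tame s0 X -> tame s0 Y -> tame s0 (X :&: Y).
Proof.
case=> [-> tY | [X1 X2]].
  by left; apply/setP => s; rewrite !inE; case: eqP => // ->; rewrite (tame_set0 tY).
case=> [-> | [Y1 Y2]].
  by left; apply/setP => s; rewrite !inE andbC; case: eqP => // ->; rewrite (covers_set0 X1).
right; split=> [s card_s | /setIP [/X2 covX /Y2 covY] s card_s].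
  by rewrite inE !(X1, Y1).
by rewrite inE covX ?covY.
Qed.

Lemma tameU s0 X Y : tame s0 X -> tame s0 Y -> tame s0 (X :|: Y).
Proof.
have setU_set0 (Z : {set {set W}}) : set0 \in Z -> [set set0] :|: Z = Z.
  by move=> Z0; apply/setUidPr; rewrite sub1set.
case=> [-> tY | [X1 X2]]; first by rewrite setU_set0 ?(tame_set0 tY).
case=> [-> | [Y1 Y2]]; first by rewrite setUC setU_set0; [right | exact: covers_set0 X1].
by right; split=> [s /X1 | /setUP [/X2 | /Y2] cov s /cov]; rewrite inE => ->; rewrite ?orbT.
Qed.

Lemma negation_bot : negation [set set0] = setT.
Proof.
by apply/setP => s; rewrite !inE; apply/forallP => t; rewrite in_set1 implybb implybT.
Qed.

Lemma negation_covers1 X : covers 1 X -> negation X = [set set0].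
Proof.
move=> X1; apply/setP => s; rewrite !inE; apply/forallP/eqP => [negX | -> t].
  apply/setP => x; rewrite in_set0; apply/negP => sx.
  have := negX [set x]; rewrite sub1set sx X1 ?cards1 //=.
  by move/eqP/setP/(_ x); rewrite !inE eqxx.
by rewrite subset0; apply/implyP => /eqP ->; rewrite eqxx implybT.
Qed.

Lemma tame_negation s0 X : tame s0 X -> tame s0 (negation X).
Proof.
case=> [-> | [/negation_covers1 -> _]]; last by left.
by rewrite negation_bot; apply: tame_setT.
Qed.

Lemma tensorC X Y : tensor X Y = tensor Y X.
Proof.
apply/setP=> s; rewrite !inE; apply/existsP/existsP => -[t1 /existsP [t2]];
by rewrite setUC => /and3P [? ? ?]; exists t2; apply/existsP; exists t1; apply/and3P.
Qed.

Lemma tensor_botl Y : tensor [set set0] Y = Y.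
Proof.
apply/setP=> s; rewrite inE; apply/existsP/idP => [[t1 /existsP [t2]] | Ys].
  by rewrite in_set1 => /and3P [/eqP -> /eqP ->]; rewrite set0U.
by exists set0; apply/existsP; exists s; rewrite set0U eqxx set11.
Qed.

Lemma card_le2_setU s : #|s| <= 2 ->
  exists s1 s2, [/\ s = s1 :|: s2, #|s1| <= 1 & #|s2| <= 1].
Proof.
have [-> _ | [x sx]] := set_0Vmem s; first by exists set0, set0; rewrite setU0 cards0.
rewrite (cardsD1 x) sx => card_s.
by exists [set x], (s :\ x); rewrite setD1K ?cards1.
Qed.

Lemma covers2_tensor X Y : covers 1 X -> covers 1 Y -> covers 2 (tensor X Y).
Proof.
move=> X1 Y1 s /card_le2_setU [s1 [s2 [-> card_s1 card_s2]]].
by rewrite inE; apply/existsP; exists s1; apply/existsP; exists s2; rewrite eqxx X1 ?Y1.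
Qed.

Lemma tame_tensor s0 X Y : tame s0 X -> tame s0 Y -> tame s0 (tensor X Y).
Proof.
move=> tX; case: (tX) => [-> | [X1 _]]; first by rewrite tensor_botl.
case=> [-> | [Y1 _]]; first by rewrite tensorC tensor_botl.
exact/covers2_tame/covers2_tensor.
Qed.

Lemma mem_downset2 t u v : (t \in downset [set u; v]) = (t \subset u) || (t \subset v).
Proof.
rewrite inE; apply/existsP/orP => [[w /andP [/set2P [] -> tw]] | [tu | tv]].
- by left.
- by right.
- by exists u; rewrite set21.
- by exists v; rewrite set22.
Qed.

Lemma downset2_not_tame u v s : u != set0 -> #|s| <= 2 ->
  ~~ (s \subset u) -> ~~ (s \subset v) -> ~ tame u (downset [set u; v]).
Proof.
move=> nz_u card_s su sv; apply: not_tame card_s _ => //.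
  by rewrite mem_downset2 subxx.
by rewrite mem_downset2 negb_or su.
Qed.

End Families.

Section Propositions.
Variables (W : finType) (V : W -> nat -> bool).
Implicit Types (g h : form) (s : {set W}).

Lemma prop_Bot : prop V Bot = [set set0].
Proof. by apply/setP => s; rewrite !inE. Qed.

Lemma prop_Top : prop V Top = setT.
Proof. by apply/setP => s; rewrite !inE. Qed.

Lemma prop_Neg g : prop V (Neg g) = negation (prop V g).
Proof. by apply/setP => s; rewrite !inE; apply: eq_forallb => t; rewrite inE. Qed.

Lemma prop_Ques g : prop V (Ques g) = prop V g :|: negation (prop V g).
Proof. by apply/setP => s; rewrite -prop_Neg !inE. Qed.

Lemma prop_And g h : prop V (And g h) = prop V g :&: prop V h.
Proof. by apply/setP => s; rewrite !inE. Qed.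

Lemma prop_Or g h : prop V (Or g h) = prop V g :|: prop V h.
Proof. by apply/setP => s; rewrite !inE. Qed.

Lemma prop_Tensor g h : prop V (Tensor g h) = tensor (prop V g) (prop V h).
Proof.
apply/setP => s; rewrite !inE; apply: eq_existsb => t1; apply: eq_existsb => t2.
by rewrite !inE.
Qed.

Lemma prop_Atom_nowhere x : (forall w, ~~ V w x) -> prop V (Atom x) = [set set0].
Proof.
move=> Vx; apply/setP => s; rewrite !inE /=; apply/forall_inP/eqP => [sx | -> w].
  by apply/setP => w; rewrite in_set0; apply/negP => /sx; rewrite (negbTE (Vx w)).
by rewrite in_set0.
Qed.

Lemma covers1_question x : covers 1 (prop V (Ques (Atom x))).
Proof.
move=> s; rewrite leq_eqVlt ltnS leqn0 cards_eq0 inE /=.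
case/orP => [/cards1P [w ->] | /eqP ->].
  case Vwx: (V w x); first by apply/orP; left; apply/forall_inP => w' /set1P ->.
  apply/orP; right; apply/forallP => t; rewrite subset1.
  case: eqP => [-> | _] /=; last by case: eqP => [-> | _]; rewrite ?eqxx ?implybT.
  by apply/implyP => /forall_inP /(_ w (set11 w)); rewrite Vwx.
by apply/orP; left; apply/forall_inP => w; rewrite in_set0.
Qed.

Lemma question_undecided x s u v :
  u \in s -> v \in s -> V u x -> ~~ V v x -> s \notin prop V (Ques (Atom x)).
Proof.
move=> su sv Vux Vvx; rewrite inE /= negb_or; apply/andP; split.
  by apply/forall_inP => /(_ v sv); apply/negP.
apply/forallP => /(_ [set u]); rewrite sub1set su /=.
have -> : [forall w in [set u], V w x] by apply/forall_inP => w /set1P ->.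
by rewrite -cards_eq0 cards1.
Qed.

Lemma tame_question s0 x u v :
  u \in s0 -> v \in s0 -> V u x -> ~~ V v x -> tame s0 (prop V (Ques (Atom x))).
Proof.
move=> s0u s0v Vux Vvx; right; split=> [|s0X]; first exact: covers1_question.
by have := question_undecided s0u s0v Vux Vvx; rewrite s0X.
Qed.

Lemma tame_subst2 s0 a b g h phi :
  (forall y, occurs y phi -> tame s0 (prop V (subst2 a b g h (Atom y)))) ->
  tame s0 (prop V (subst2 a b g h phi)).
Proof.
elim: phi => [y | | | f IHf | f IHf | f1 IH1 f2 IH2 | f1 IH1 f2 IH2 | f1 IH1 f2 IH2]
  /= tame_atoms.
- by apply: tame_atoms; rewrite /= eqxx.
- by rewrite prop_Bot; left.
- by rewrite prop_Top; apply: tame_setT.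
- by rewrite prop_Neg; apply/tame_negation/IHf.
- by rewrite prop_Ques; apply: tameU (IHf _) (tame_negation (IHf _)).
- by rewrite prop_And; apply: tameI;
    [apply: IH1 | apply: IH2] => y occ_y; apply: tame_atoms; rewrite /= occ_y ?orbT.
- by rewrite prop_Or; apply: tameU;
    [apply: IH1 | apply: IH2] => y occ_y; apply: tame_atoms; rewrite /= occ_y ?orbT.
- by rewrite prop_Tensor; apply: tame_tensor;
    [apply: IH1 | apply: IH2] => y occ_y; apply: tame_atoms; rewrite /= occ_y ?orbT.
Qed.

End Propositions.

Lemma tame_questions p q a b phi :
  p <> q -> ~~ occurs p phi -> ~~ occurs q phi ->
  tame [set w1; w2] (prop (Vpq p q) (subst2 a b (Ques (Atom p)) (Ques (Atom q)) phi)).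
Proof.
move=> /eqP neq_pq np nq; apply: tame_subst2 => y occ_y /=.
case: ifP => _.
  by apply: (tame_question (u := w1) (v := w2));
    rewrite ?set21 ?set22 // /Vpq /= ?eqxx ?orbF.
case: ifP => _.
  by apply: (tame_question (u := w2) (v := w1));
    rewrite ?set21 ?set22 // /Vpq /= ?eqxx ?orbF // eq_sym.
left; apply: prop_Atom_nowhere => w; rewrite /Vpq.
have [/negbTE -> /negbTE ->] : y != p /\ y != q.
  by split; [apply: contraNneq np | apply: contraNneq nq] => <-.
by rewrite !andbF.
Qed.

Theorem lemma2 (p q a b : nat) (phi : form) :
  p <> q -> a <> b -> ~~ occurs p phi -> ~~ occurs q phi ->
  let X := prop (Vpq p q) (subst2 a b (Ques (Atom p)) (Ques (Atom q)) phi) in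
  [/\ X <> famA, X <> famB & X <> famC].
Proof.
move=> neq_pq _ np nq X.
have tX : tame [set w1; w2] X := tame_questions a b neq_pq np nq.
have nz_w12 : [set w1; w2] != set0 by apply/set0Pn; exists w1; rewrite set21.
split=> eqX; rewrite eqX in tX;
  [ apply: (downset2_not_tame (s := [set w2; w3])) tX
  | apply: (downset2_not_tame (s := [set w1; w3])) tX .. ];
  by rewrite ?cards2 ?subUset ?sub1set ?inE.
Qed.
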